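(* Let $n\in\mathbb{N}$, $i\in\{1,\ldots,n\}$ and $x\in\mathcal{X}^n$. Then \[ x_i \ge \frac{1}{(n-i+1)(s_i-1)}, \] with equality if and only if $x = \bar x(i)$.
   Context: The Sylvester sequence: $s_1 = 2$, $s_i = \prod_{j=1}^{i-1} s_j + 1$ for $i\ge2$. $\mathcal{X}^n$ is the set of $x\in\mathbb{R}^n$ with $x_1+\cdots+x_n = 1$, $1 \ge x_1 \ge \cdots \ge x_n \ge 0$, and $x_1\cdots x_j \le x_{j+1}+\cdots+x_n$ for all $j\in\{1,\ldots,n-1\}$. For $l\in\{1,\ldots,n\}$, $\bar x(l) := \big(\frac{1}{s_1},\ldots,\frac{1}{s_{l-1}}, \frac{1}{(n-l+1)(s_l-1)},\ldots,\frac{1}{(n-l+1)(s_l-1)}\big)\in\mathbb{R}^n$ (last value repeated $n-l+1$ times). *)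

From HB Require Import structures.
From mathcomp Require Import all_boot all_order all_algebra.
Set Implicit Arguments. Unset Strict Implicit. Unset Printing Implicit Defensive.
Import Order.TTheory GRing.Theory Num.Theory.

(* Sylvester sequence, 1-based, literally as in the paper:
   s_1 = 2, s_i = (\prod_{j=1}^{i-1} s_j) + 1 for i >= 2.
   sylv_list k = [:: s_1; ...; s_k] is built by iterating the defining rule;
   sylv i := s_i (and sylv 0 is an unused junk value). *)
Fixpoint sylv_list (k : nat) : seq nat :=
  match k with
  | 0 => [::]
  | k'.+1 => let l := sylv_list k' in
             rcons l (if k' is 0 then 2 else (\prod_(s <- l) s).+1)
  end.

Definition sylv (i : nat) : nat := nth 0 (sylv_list i) i.-1.

Example sylv_check : [:: sylv 1; sylv 2; sylv 3; sylv 4] = [:: 2; 3; 7; 43].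
Proof. by rewrite /sylv /= !big_cons big_nil. Qed.

Local Open Scope ring_scope.

(* Vectors x in R^n are functions 'I_n -> R; the paper's coordinate x_k
   (1 <= k <= n) is x (k-1) here. *)

Definition inX (R : realFieldType) (n : nat) (x : 'I_n -> R) : Prop :=
  [/\ \sum_(k < n) x k = 1,
      (forall k : 'I_n, x k <= 1),
      (forall k : 'I_n, 0 <= x k),
      (forall k l : 'I_n, (k <= l)%N -> x l <= x k) &
      (forall j : nat, (1 <= j <= n.-1)%N ->
         \prod_(k < n | (k < j)%N) x k <= \sum_(k < n | (j <= k)%N) x k)].

(* xbar(l) for 1 <= l <= n, coordinate k (0-based, paper index k+1). *)
Definition xbar (R : realFieldType) (n l : nat) (k : 'I_n) : R :=
  if (k.+1 < l)%N then ((sylv k.+1)%:R)^-1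
  else (((n - l + 1)%N%:R) * (((sylv l)%:R) - 1))^-1.

From HB Require Import structures.
From mathcomp Require Import all_boot all_order all_algebra.
From mathcomp Require Import ring lra zify.
From Stdlib Require Import FunctionalExtensionality.
Import Order.TTheory GRing.Theory Num.Theory.

(* Write s_1, s_2, ... for the Sylvester sequence, P_j = s_1 ... s_j, so that
   s_(j+1) = P_j + 1, the unit fractions 1/s_1, ..., 1/s_j sum to 1 - 1/P_j
   and multiply to 1/P_j.  For x in X^n (nonincreasing, nonnegative, summing
   to 1, with x_1...x_j <= x_(j+1) + ... + x_n = 1 - (x_1 + ... + x_j)):

   1. Prefix bound: x_1 + ... + x_j <= 1/s_1 + ... + 1/s_j for j < n.  By
      strong induction on j: if the prefix sum reached the Sylvester one, a
      product comparison (Abel summation followed by AM-GM applied to the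
      ratios (1/s_l)/x_l) forces x_l = 1/s_l for l <= j.
   2. Hence the tail x_i + ... + x_n is at least 1/P_(i-1) = 1/(s_i - 1), and
      since x is nonincreasing it is at most (n-i+1) x_i, which gives the
      bound.  In the equality case both estimates are tight: the prefix is
      the Sylvester one by the rigidity of step 1, and the tail is constant,
      i.e. x = xbar(i). *)

Lemma size_sylv_list j : size (sylv_list j) = j.
Proof. by elim: j => //= j IH; rewrite size_rcons IH. Qed.

Lemma sylv_listE j : sylv_list j = [seq sylv l.+1 | l <- iota 0 j].
Proof.
elim: j => // j IH.
rewrite -addn1 iotaD map_cat addn1 cats1 -IH /= /sylv /=.
by rewrite nth_rcons size_sylv_list ltnn eqxx.
Qed.

Definition sylv_prod (j : nat) : nat := \prod_(0 <= l < j) sylv l.+1.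

Lemma sylvS j : sylv j.+1 = (sylv_prod j).+1.
Proof.
rewrite /sylv /= nth_rcons size_sylv_list ltnn eqxx.
case: j => [|j]; first by rewrite /sylv_prod big_geq.
by rewrite sylv_listE big_map /sylv_prod /index_iota subn0.
Qed.

Lemma sylv_prod_gt0 j : (0 < sylv_prod j)%N.
Proof.
elim: j => [|j IH]; first by rewrite /sylv_prod big_geq.
by rewrite /sylv_prod big_nat_recr //= sylvS muln_gt0 IH.
Qed.

Lemma sylv_prodS j : sylv_prod j.+1 = (sylv_prod j * (sylv_prod j).+1)%N.
Proof. by rewrite /sylv_prod big_nat_recr //= sylvS. Qed.

Local Open Scope ring_scope.

Section RealFacts.
Variable R : realFieldType.

(* sylv_frac l = 1/s_(l+1) and sylv_rem j = 1/P_j: the Sylvester unit fractions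
   and the gap they leave below 1. *)
Definition sylv_frac (l : nat) : R := ((sylv l.+1)%:R)^-1.
Definition sylv_rem (j : nat) : R := ((sylv_prod j)%:R)^-1.

Lemma sylv_frac_gt0 l : 0 < sylv_frac l.
Proof. by rewrite /sylv_frac sylvS invr_gt0 ltr0Sn. Qed.

Lemma prod_sylv_frac j : \prod_(0 <= l < j) sylv_frac l = sylv_rem j.
Proof.
elim: j => [|j IH]; first by rewrite big_geq // /sylv_rem /sylv_prod big_geq // invr1.
by rewrite big_nat_recr //= IH /sylv_rem /sylv_frac sylvS sylv_prodS natrM invfM.
Qed.

(* 1/s_1 + ... + 1/s_j = 1 - 1/P_j (telescoping: 1/P_j - 1/(P_j+1) = 1/P_(j+1)). *)
Lemma sum_sylv_frac j : \sum_(0 <= l < j) sylv_frac l = 1 - sylv_rem j.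
Proof.
elim: j => [|j IH]; first by rewrite big_geq // /sylv_rem /sylv_prod big_geq // invr1 subrr.
rewrite big_nat_recr //= IH /sylv_rem /sylv_frac sylvS sylv_prodS natrM -natr1.
have q0 : (sylv_prod j)%:R != 0 :> R by rewrite pnatr_eq0 -lt0n sylv_prod_gt0.
have q1 : (sylv_prod j)%:R + 1 != 0 :> R by rewrite natr1 pnatr_eq0.
by field; rewrite q0 q1.
Qed.

Lemma AGM_le1 (I : finType) (r : I -> R) :
  (forall i, 0 <= r i) -> \sum_i r i <= #|I|%:R ->
  \prod_i r i <= 1 /\ (\prod_i r i = 1 -> forall i, r i = 1).
Proof.
move=> r_ge0 sum_le.
have AGM := leif_AGM (A := predT) (fun i _ => r_ge0 i).
rewrite /= -/#|I| in AGM.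
set mu := (\sum_(i in predT) r i) / _ in AGM.
have [I0 | I_gt0] := posnP #|I|.
  have no_elt (i : I) : False by have := card0_eq I0 i; rewrite !inE.
  by split=> [|_ i]; [rewrite big_pred0 // => i; case: (no_elt i) | case: (no_elt i)].
have mu_ge0 : 0 <= mu by rewrite divr_ge0 ?ler0n ?sumr_ge0.
have mu_le1 : mu <= 1 by rewrite ler_pdivrMr ?ltr0n // mul1r.
have mun_le1 : mu ^+ #|I| <= 1 by apply: exprn_ile1.
split=> [|prod1 i]; first exact: le_trans (leif_le AGM) mun_le1.
have mun1 : mu ^+ #|I| = 1 by apply/eqP; rewrite eq_le mun_le1 -prod1 (leif_le AGM).
have mu1 : mu = 1 by apply/eqP; rewrite -(pexpr_eq1 I_gt0 mu_ge0) mun1.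
have /forall_inP r_const : [forall i in predT, forall j in predT, r i == r j].
  by case: AGM => _ <-; rewrite prod1 mun1.
have sumE : \sum_(j in predT) r j = #|I|%:R * r i.
  rewrite (eq_bigr (fun _ => r i)) ?sumr_const ?mulr_natl // => j _.
  by move/forall_inP: (r_const j isT) => /(_ i isT) /eqP.
by move: mu1; rewrite /mu sumE mulrC mulKf // pnatr_eq0 -lt0n.
Qed.

End RealFacts.

Section ProductComparison.
Variable R : realFieldType.
Set Implicit Arguments. Unset Strict Implicit.

Lemma abel_ge0 k (d w : nat -> R) :
  (forall l, (l.+1 < k)%N -> w l <= w l.+1) ->
  ((0 < k)%N -> 0 <= w 0%N) ->
  (forall m, (m <= k)%N -> 0 <= \sum_(m <= l < k) d l) ->
  0 <= \sum_(0 <= l < k) d l * w l.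
Proof.
elim: k d w => [|k IH] d w w_incr w0_ge0 tails_ge0; first by rewrite big_geq.
have shift : \sum_(0 <= l < k.+1) d l * w l =
    w 0%N * \sum_(0 <= l < k.+1) d l + \sum_(0 <= l < k) d l.+1 * (w l.+1 - w 0%N).
  rewrite !big_nat_recl // mulrDr mulrC -addrA; congr (_ + _).
  by rewrite mulr_sumr -big_split /=; apply: eq_bigr => l _; ring.
rewrite shift addr_ge0 ?mulr_ge0 ?w0_ge0 ?tails_ge0 //.
apply: IH => [l lk | k_gt0 | m mk] /=.
- by rewrite lerD2r (w_incr l.+1 lk).
- by rewrite subr_ge0 (w_incr 0%N k_gt0).
- by have := tails_ge0 m.+1 mk; rewrite big_add1.
Qed.

Lemma sum_ratio_le k (a b : nat -> R) :
  (forall l, (l < k)%N -> 0 < a l) ->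
  (forall l, (l.+1 < k)%N -> a l.+1 <= a l) ->
  (forall m, (m <= k)%N -> \sum_(m <= l < k) b l <= \sum_(m <= l < k) a l) ->
  \sum_(0 <= l < k) b l / a l <= k%:R.
Proof.
move=> a_gt0 a_noninc tails.
have defect_ge0 : 0 <= \sum_(0 <= l < k) (a l - b l) * (a l)^-1.
  apply: abel_ge0 => [l lk | k_gt0 | m mk].
  - by rewrite lef_pV2 ?posrE ?a_noninc ?a_gt0 //; lia.
  - by rewrite invr_ge0 ltW ?a_gt0.
  - by rewrite sumrB subr_ge0 tails.
have -> : \sum_(0 <= l < k) b l / a l =
          k%:R - \sum_(0 <= l < k) (a l - b l) * (a l)^-1.
  rewrite -[k in k%:R]subn0 -sumr_const_nat -sumrB.
  apply: eq_big_nat => l /andP[_ lk].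
  by rewrite mulrBl divff ?gt_eqF ?a_gt0 // opprB addrC subrK.
by rewrite lerBlDr lerDl.
Qed.

Lemma prod_le_of_tails k (a b : nat -> R) :
  (forall l, (l < k)%N -> 0 < a l) ->
  (forall l, (l.+1 < k)%N -> a l.+1 <= a l) ->
  (forall l, (l < k)%N -> 0 <= b l) ->
  (forall m, (m <= k)%N -> \sum_(m <= l < k) b l <= \sum_(m <= l < k) a l) ->
  \prod_(0 <= l < k) b l <= \prod_(0 <= l < k) a l /\
  (\prod_(0 <= l < k) b l = \prod_(0 <= l < k) a l ->
   forall l, (l < k)%N -> b l = a l).
Proof.
move=> a_gt0 a_noninc b_ge0 tails.
pose r (i : 'I_k) := b i / a i.
have [prod_r_le1 prod_r_eq1] :
    \prod_i r i <= 1 /\ (\prod_i r i = 1 -> forall i, r i = 1).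
  apply: AGM_le1 => [i|]; first by rewrite divr_ge0 ?b_ge0 ?ltW ?a_gt0.
  by rewrite card_ord -(big_mkord xpredT (fun l => b l / a l)) sum_ratio_le.
have prod_a_gt0 : 0 < \prod_(0 <= l < k) a l.
  by rewrite big_nat_cond prodr_gt0 // => l /andP[/andP[_ /a_gt0]].
have prod_rE : \prod_i r i = \prod_(0 <= l < k) b l / \prod_(0 <= l < k) a l.
  by rewrite prodf_div !big_mkord.
split=> [|prod_eq l lk].
  by move: prod_r_le1; rewrite prod_rE ler_pdivrMr // mul1r.
have := prod_r_eq1 _ (Ordinal lk).
rewrite prod_rE prod_eq divff ?gt_eqF //.
by move=> /(_ erefl); exact: divr1_eq.
Qed.

End ProductComparison.

Section PrefixBound.
Variable R : realFieldType.
Set Implicit Arguments. Unset Strict Implicit.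
Implicit Types (a : nat -> R) (k : nat).

Lemma noninc_le k a :
  (forall l, (l.+1 < k)%N -> a l.+1 <= a l) ->
  forall l m, (l <= m)%N -> (m < k)%N -> a m <= a l.
Proof.
move=> a_noninc l m; elim: m => [|m IH] lm mk; first by have -> : l = 0%N by lia.
have [lm'|ml] := ltnP l m.+1; last by have -> : l = m.+1 by lia.
by apply: le_trans (a_noninc m mk) (IH _ _); lia.
Qed.

(* Rigidity: let a >= 0 be nonincreasing on [0,k) with product at most 1 minus
   its sum, whose proper prefix sums stay below the Sylvester ones.  If its
   k-prefix sum reaches the Sylvester one, then a_l = 1/s_(l+1) for l < k: the
   product comparison with b = Sylvester fractions squeezes
   1/P_k = prod b <= prod a <= 1 - sum a <= 1 - sum b = 1/P_k. *)
Lemma prefix_rigid k a :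
  (forall l, (l < k)%N -> 0 <= a l) ->
  (forall l, (l.+1 < k)%N -> a l.+1 <= a l) ->
  \prod_(0 <= l < k) a l <= 1 - \sum_(0 <= l < k) a l ->
  (forall j, (j < k)%N -> \sum_(0 <= l < j) a l <= \sum_(0 <= l < j) sylv_frac R l) ->
  \sum_(0 <= l < k) sylv_frac R l <= \sum_(0 <= l < k) a l ->
  forall l, (l < k)%N -> a l = sylv_frac R l.
Proof.
case: k => [|k] // a_ge0 a_noninc chain prefix_le sum_ge.
have last_ge : sylv_frac R k <= a k.
  by move: sum_ge; rewrite !big_nat_recr //=; have := prefix_le k (ltnSn k); lra.
have a_gt0 l : (l < k.+1)%N -> 0 < a l.
  move=> lk; apply: lt_le_trans (sylv_frac_gt0 R k) (le_trans last_ge _).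
  by apply: (noninc_le a_noninc); lia.
have tails m : (m <= k.+1)%N ->
    \sum_(m <= l < k.+1) sylv_frac R l <= \sum_(m <= l < k.+1) a l.
  move=> mk; have [{}mk|km] := ltnP m k.+1; last by rewrite !big_geq.
  have := prefix_le m mk; move: sum_ge.
  by rewrite !(big_cat_nat (leq0n m) (ltnW mk)) /=; lra.
have [prod_le prod_eq] := prod_le_of_tails a_gt0 a_noninc
  (fun l _ => ltW (sylv_frac_gt0 R l)) tails.
move=> l lk; symmetry; apply: prod_eq => //.
apply/eqP; rewrite eq_le prod_le /= prod_sylv_frac.
by apply: le_trans chain _; have := sum_sylv_frac R k.+1; lra.
Qed.

Lemma prefix_sum_le k a :
  (forall l, (l < k)%N -> 0 <= a l) ->
  (forall l, (l.+1 < k)%N -> a l.+1 <= a l) ->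
  (forall j, (j <= k)%N -> \prod_(0 <= l < j) a l <= 1 - \sum_(0 <= l < j) a l) ->
  forall j, (j <= k)%N -> \sum_(0 <= l < j) a l <= \sum_(0 <= l < j) sylv_frac R l.
Proof.
move=> a_ge0 a_noninc chain; elim/ltn_ind => j IH jk.
have [sum_ge|/ltW //] := leP (\sum_(0 <= l < j) sylv_frac R l) (\sum_(0 <= l < j) a l).
have a_eq := prefix_rigid (fun l lj => a_ge0 l (leq_trans lj jk))
  (fun l lj => a_noninc l (leq_trans lj jk)) (chain j jk)
  (fun i ij => IH i ij (ltnW (leq_trans ij jk))) sum_ge.
by rewrite (eq_big_nat _ _ (fun l lj => a_eq l (proj2 (andP lj)))).
Qed.

End PrefixBound.

(* Vectors x : 'I_n -> R read as sequences, padded with 0 beyond n. *)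
Section Coordinates.
Variables (R : realFieldType) (n : nat) (x : 'I_n -> R).
Set Implicit Arguments. Unset Strict Implicit.

Definition coord (l : nat) : R :=
  if @insub nat (fun l => l < n)%N 'I_n l is Some j then x j else 0.

Lemma coord_lt l (ln : (l < n)%N) : coord l = x (Ordinal ln).
Proof. by rewrite /coord (insubT (fun l => l < n)%N ln). Qed.

Lemma coordE (j : 'I_n) : coord j = x j.
Proof. by rewrite (coord_lt (ltn_ord j)); congr x; apply: val_inj. Qed.

Lemma big_coord_prefix (op : R -> R -> R) (idx : R) j : (j <= n)%N ->
  \big[op/idx]_(k < n | (k < j)%N) x k = \big[op/idx]_(0 <= l < j) coord l.
Proof.
move=> jn; rewrite big_mkord (big_ord_widen _ _ jn).
by apply: eq_bigr => k _; rewrite coordE.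
Qed.

Hypothesis x_in : inX x.

Lemma coord_ge0 l : 0 <= coord l.
Proof.
case: x_in => _ _ x_ge0 _ _.
by rewrite /coord; case: insub.
Qed.

Lemma coord_noninc l m : (l <= m)%N -> (m < n)%N -> coord m <= coord l.
Proof.
case: x_in => _ _ _ x_noninc _ lm mn.
by rewrite (coord_lt mn) (coord_lt (leq_ltn_trans lm mn)); apply: x_noninc.
Qed.

Lemma coord_total : \sum_(0 <= l < n) coord l = 1.
Proof.
case: x_in => x_sum _ _ _ _.
rewrite -(big_coord_prefix _ _ (leqnn n)) -x_sum.
by apply: eq_bigl => k; rewrite ltn_ord.
Qed.

Lemma coord_chain j : (j < n)%N ->
  \prod_(0 <= l < j) coord l <= 1 - \sum_(0 <= l < j) coord l.
Proof.
case: x_in => x_sum _ _ _ x_chain jn.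
have [->|j_gt0] := posnP j; first by rewrite !big_geq // subr0.
rewrite -!big_coord_prefix 1?ltnW //.
have -> : 1 - \sum_(k < n | (k < j)%N) x k = \sum_(k < n | (j <= k)%N) x k.
  rewrite -x_sum (bigID (fun k : 'I_n => (k < j)%N)) /= addrC addrK.
  by apply: eq_bigl => k; rewrite -leqNgt.
by apply: x_chain; lia.
Qed.

Lemma coord_prefix_le p : (p < n)%N -> forall j, (j <= p)%N ->
  \sum_(0 <= l < j) coord l <= \sum_(0 <= l < j) sylv_frac R l.
Proof.
move=> pn; apply: prefix_sum_le => [l _ | l lp | j jp].
- exact: coord_ge0.
- by apply: coord_noninc; lia.
- by apply: coord_chain; lia.
Qed.

Lemma tail_ge p : (p < n)%N -> sylv_rem R p <= \sum_(p <= l < n) coord l.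
Proof.
move=> pn; have := coord_prefix_le pn (leqnn p).
rewrite sum_sylv_frac; have := coord_total.
by rewrite (big_cat_nat (leq0n p) (ltnW pn)) /=; lra.
Qed.

Lemma tail_le p : (p <= n)%N ->
  \sum_(p <= l < n) coord l <= (n - p)%:R * coord p.
Proof.
move=> pn; rewrite mulr_natl -sumr_const_nat big_nat_cond [leRHS]big_nat_cond.
by apply: ler_sum => l /andP[/andP[pl ln] _]; apply: coord_noninc.
Qed.

Lemma coord_lower p : (p < n)%N -> sylv_rem R p / (n - p)%:R <= coord p.
Proof.
move=> pn; rewrite ler_pdivrMr ?ltr0n ?subn_gt0 // mulrC.
exact: le_trans (tail_ge pn) (tail_le (ltnW pn)).
Qed.

Lemma coord_extremal p : (p < n)%N -> coord p = sylv_rem R p / (n - p)%:R ->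
  (forall l, (l < p)%N -> coord l = sylv_frac R l) /\
  (forall l, (p <= l < n)%N -> coord l = coord p).
Proof.
move=> pn coord_eq.
have np_neq0 : (n - p)%:R != 0 :> R by rewrite pnatr_eq0 subn_eq0 -ltnNge.
have tail_eq : \sum_(p <= l < n) coord l = sylv_rem R p.
  apply/eqP; rewrite eq_le tail_ge // andbT (le_trans (tail_le (ltnW pn))) //.
  by rewrite coord_eq mulrC divfK.
split.
  apply: prefix_rigid (coord_chain pn) _ _ => [l _ | l lp | j jp |].
  - exact: coord_ge0.
  - by apply: coord_noninc; lia.
  - exact/(coord_prefix_le pn)/ltnW.
  - rewrite sum_sylv_frac; have := coord_total.
    by rewrite (big_cat_nat (leq0n p) (ltnW pn)) /= tail_eq; lra.
have gap0 : \sum_(p <= l < n) (coord p - coord l) = 0.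
  by rewrite sumrB sumr_const_nat -mulr_natl tail_eq coord_eq mulrC divfK ?subrr.
move: gap0; rewrite big_geq_mkord => gap0 l /andP[pl ln].
apply/eqP; rewrite eq_sym -subr_eq0; apply/eqP.
apply: (psumr_eq0P _ gap0 (i := Ordinal ln) pl) => k pk.
by rewrite subr_ge0 coord_noninc.
Qed.

End Coordinates.

Lemma bound_sylv_rem (R : realFieldType) (n p : nat) : (p < n)%N ->
  (((n - p.+1 + 1)%N%:R) * (((sylv p.+1)%:R) - 1))^-1 = sylv_rem R p / (n - p)%:R.
Proof.
move=> pn; rewrite sylvS -natr1 addrK invfM mulrC.
by have -> : (n - p.+1 + 1 = n - p)%N by lia.
Qed.

Theorem mainTheorem15 (R : realFieldType) (n : nat) (i : 'I_n) (x : 'I_n -> R) :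
  inX x ->
  (((n - i.+1 + 1)%N%:R) * (((sylv i.+1)%:R) - 1))^-1 <= x i /\
  (x i = (((n - i.+1 + 1)%N%:R) * (((sylv i.+1)%:R) - 1))^-1
     <-> x = @xbar R n i.+1).
Proof.
move=> x_in; have i_lt_n := ltn_ord i.
rewrite bound_sylv_rem // -coordE.
split; first exact: coord_lower.
split=> [x_i_eq | ->]; last by rewrite coordE /xbar ltnn bound_sylv_rem.
have [head tail] := coord_extremal x_in i_lt_n x_i_eq.
apply: functional_extensionality => k.
rewrite /xbar -coordE bound_sylv_rem //; case: ltnP => [ki | ik].
- by rewrite head.
- by rewrite -x_i_eq tail // ltn_ord andbT.
Qed.
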